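(* Let $\mathcal{U}\subset\mathbb{R}^n\times\mathbb{R}^p$ be open, $\mathcal{D}\subset\mathcal{U}$ nonempty, $\Gamma:\mathcal{D}\times\mathbb{R}^m\rightrightarrows\mathbb{R}^q$ with $\Gamma(\xi,\cdot)$ positively homogeneous for all $\xi\in\mathcal{D}$, and let $\bar\xi\in\mathcal{D}$, $H:=\Gamma(\bar\xi,\cdot)$. Suppose $\Gamma$ is outer semicontinuous and that there are $s\le q$ and $\mathcal{T}:\mathbb{R}^m\rightrightarrows\mathbb{R}^{q-s}$ with $H(z)=\{0\}\times\mathcal{T}(z)$ for all $z\in\mathbb{R}^m$ (where $0\in\mathbb{R}^s$). If $\mathcal{T}(0)=\{0\}$ and $\mathcal{T}^{-1}(0)=\{0\}$, then the mapping $\mathcal{K}(\xi,z):=\mathrm{cone}(\Gamma(\xi,z))$ on $\mathcal{D}\times\mathbb{R}^m$ is outer semicontinuous relative to $\mathcal{D}\times\mathrm{bd}\,\mathbb{B}$ at $(\bar\xi,z)$ for every $z\in\mathrm{bd}\,\mathbb{B}\cap\mathrm{dom}\,H$.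
   Context: $\mathbb{B}$ closed unit ball, $\mathrm{bd}$ boundary, $\mathrm{cone}(Z):=\bigcup_{\gamma\ge0}\gamma Z$, $\mathcal{T}^{-1}(0):=\{z\mid 0\in\mathcal{T}(z)\}$. Positive homogeneity: $H(\gamma z)=\gamma H(z)$ for all $\gamma>0$. A map $M$ is outer semicontinuous at $x$ relative to $X$ if $\limsup_{x'\to x,\,x'\in X}M(x')\subset M(x)$ (Painlevé–Kuratowski); $\Gamma$ outer semicontinuous means this at every point of $\mathcal{D}\times\mathbb{R}^m$. *)

From HB Require Import structures.
From mathcomp Require Import all_boot all_order all_algebra.
From mathcomp Require Import all_classical all_reals topology normedtype sequences.
Set Implicit Arguments. Unset Strict Implicit. Unset Printing Implicit Defensive.
Import Order.TTheory GRing.Theory Num.Theory.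
Import numFieldNormedType.Exports.
Local Open Scope classical_set_scope.
Local Open Scope ring_scope.

Definition eucl_norm {R : realType} {m : nat} (z : 'rV[R]_m) : R :=
  Num.sqrt (\sum_(i < m) (z ord0 i) ^+ 2).

(* bd B : boundary of the closed Euclidean unit ball = unit sphere. *)
Definition unit_sphere (R : realType) (m : nat) : set 'rV[R]_m :=
  [set z | eucl_norm z = 1].

Definition cone {R : realType} {q : nat} (Z : set 'rV[R]_q) : set 'rV[R]_q :=
  [set y | exists2 g : R, 0 <= g & exists2 x, Z x & y = g *: x].

Definition pos_homogeneous {R : realType} {m q : nat}
  (H : 'rV[R]_m -> set 'rV[R]_q) : Prop :=
  forall (g : R) (z : 'rV[R]_m), 0 < g -> H (g *: z) = (fun y => g *: y) @` H z.

Definition sdom {A B : Type} (M : A -> set B) : set A := [set x | M x !=set0].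

(* Painleve-Kuratowski outer limit of M at x relative to X (sequential form,
   appropriate for the finite-dimensional spaces used here). *)
Definition outer_limit {A B : topologicalType} (M : A -> set B) (X : set A) (x : A)
  : set B :=
  [set y | exists (xk : nat -> A) (yk : nat -> B),
     [/\ (forall k, X (xk k)), (forall k, M (xk k) (yk k)),
         xk @ \oo --> x & yk @ \oo --> y]].

Definition osc_at {A B : topologicalType} (M : A -> set B) (X : set A) (x : A) : Prop :=
  outer_limit M X x `<=` M x.
Arguments unit_sphere : clear implicits.

From HB Require Import structures.
From mathcomp Require Import all_boot all_order all_algebra.
From mathcomp Require Import all_classical all_reals topology normedtype sequences.
Import Order.TTheory GRing.Theory Num.Theory.
Import numFieldNormedType.Exports.
Local Open Scope classical_set_scope.
Local Open Scope ring_scope.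

(* Write y_k in cone(Gamma(xi_k, z_k)) as g v with v in Gamma(xi_k, z_k) and
   rescale v by homogeneity to u_k := v / (1 + |v|), which lies in
   Gamma(xi_k, (1 - |u_k|) z_k) and in the unit ball.  A subsequence of the u_k
   converges to some u, and outer semicontinuity puts u in H(t z) with
   t = 1 - |u|.  Since H(0) = {0}, t = 0 would give u = 0 although |u| = 1; so
   t > 0 and u = t x with x in H(z).  As 0 is not in H(z) (because
   T^-1(0) = {0} and z <> 0), u <> 0, so the scalars |y_k| / |u_k| converge and
   y = (|y| / |u|) t x lies in cone(H(z)). *)

Lemma increasing_seq_cvg_infty (f : nat -> nat) :
  increasing_seq f -> f @ \oo --> \oo.
Proof.
move=> /increasing_seqP f_incr A [N _ NA]; exists N => // k /= Nk.
apply: NA; apply: leq_trans Nk _; elim: k => // k IHk.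
exact: leq_ltn_trans IHk (f_incr k).
Qed.

Lemma cvg_subseq {T : topologicalType} {u : nat -> T} {a : T} {f : nat -> nat} :
  increasing_seq f -> u @ \oo --> a -> u \o f @ \oo --> a.
Proof. by move=> /increasing_seq_cvg_infty f_oo ua; apply: cvg_comp ua. Qed.

Lemma compact_cvg_subseq {R : realType} {V : normedModType R} (A : set V)
    (u : nat -> V) : compact A -> (forall k, A (u k)) ->
  exists f a, [/\ increasing_seq f, A a & u \o f @ \oo --> a].
Proof.
move=> cA Au.
have [a [Aa ua]] : exists a, A a /\ cluster (u @ \oo) a.
  by apply: cA; exists 0%N => // k _; exact: Au.
have dist_cluster : cluster ((fun k => `|a - u k|) @ \oo) (0 : R).
  apply/cluster_eventuallyP => e N e_gt0.
  have tail_N : (u @ \oo) (u @` [set k | (N <= k)%N]).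
    by exists N => // k Nk; exists k.
  have [_ [[k /= Nk <-] ball_k]] := ua _ _ tail_N (nbhsx_ballx a _ e_gt0).
  exists k => //; rewrite sub0r normrN normr_id.
  by move: ball_k; rewrite -ball_normE => /ltW.
have [f f_incr f_cvg] := (cluster_eventually_cvg _ _).1 dist_cluster.
exists f, a; split => //; apply/cvgrPdist_lt => e e_gt0.
move/cvgrPdist_lt: f_cvg => /(_ e e_gt0); apply: filterS => k.
by rewrite sub0r normrN normr_id.
Qed.

Lemma osc_atS {A B : topologicalType} (M : A -> set B) (X Y : set A) (x : A) :
  X `<=` Y -> osc_at M Y x -> osc_at M X x.
Proof.
move=> XY oscY y [xk [yk [Xxk Myk xkx yky]]]; apply: oscY.
by exists xk, yk; split => // k; apply: XY.
Qed.

Lemma scale_norm_div {R : realType} {V : normedModType R} (h : R) (y u : V) :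
  0 <= h -> y = h *: u -> y = (`|y| / `|u|) *: u.
Proof.
move=> h_ge0 ->; have [->|u_neq0] := eqVneq u 0; first by rewrite !scaler0.
by rewrite normrZ ger0_norm // mulfK ?normr_eq0.
Qed.

Lemma scale_norm_div_cvg {R : realType} {V : normedModType R}
    {y_ u_ : nat -> V} {y u : V} :
  u != 0 -> (forall k, y_ k = (`|y_ k| / `|u_ k|) *: u_ k) ->
  y_ @ \oo --> y -> u_ @ \oo --> u -> y = (`|y| / `|u|) *: u.
Proof.
move=> u_neq0 y_E y_cvg u_cvg.
apply: (cvg_unique (@norm_hausdorff _ _) y_cvg).
rewrite (funext y_E); apply: cvgZ; last exact: u_cvg.
apply: cvgM; first exact: cvg_norm y_cvg.
by apply: cvgV (cvg_norm u_cvg); rewrite normr_eq0.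
Qed.

Lemma cone_normalize {R : realType} {m q : nat} (M : 'rV[R]_m -> set 'rV[R]_q)
    (z : 'rV[R]_m) (y : 'rV[R]_q) :
  pos_homogeneous M -> cone (M z) y ->
  exists u, [/\ `|u| < 1, M ((1 - `|u|) *: z) u & y = (`|y| / `|u|) *: u].
Proof.
move=> hom [g g_ge0 [v Mv ->]].
have c_gt0 : 0 < 1 + `|v| by rewrite ltr_wpDr.
have c_neq0 : 1 + `|v| != 0 by rewrite gt_eqF.
have norm_u : `|(1 + `|v|)^-1 *: v| = `|v| / (1 + `|v|).
  by rewrite normrZ gtr0_norm ?invr_gt0 // mulrC.
exists ((1 + `|v|)^-1 *: v); split.
- by rewrite norm_u ltr_pdivrMr // mul1r ltrDr.
- have -> : 1 - `|(1 + `|v|)^-1 *: v| = (1 + `|v|)^-1.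
    by rewrite norm_u; apply: (mulIf c_neq0); rewrite mulrBl mulVf // mul1r divfK // addrK.
  by rewrite hom ?invr_gt0 //; exists v.
- apply: (@scale_norm_div _ _ (g * (1 + `|v|))); first by rewrite mulr_ge0 // ltW.
  by rewrite scalerA -mulrA mulfV // mulr1.
Qed.

Lemma closed_ball0_compact {R : realType} {q : nat} (r : R) :
  0 < r -> compact (closed_ball (0 : 'rV[R]_q) r).
Proof.
move=> r_gt0; apply: bounded_closed_compact; last exact: closed_ball_closed.
exists r; split; first exact: gtr0_real.
move=> M r_ltM u.
rewrite closed_ballE // /closed_ball_ /= sub0r normrN => /le_trans; apply.
exact: ltW.
Qed.

Lemma castmx_row0_eq0 {R : nmodType} {s r q : nat} (e : (s + r)%N = q)
    (t : 'rV[R]_r) :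
  (castmx (erefl 1%N, e) (row_mx (0 : 'rV[R]_s) t) == 0) = (t == 0).
Proof. by case: q / e; rewrite castmx_id row_mx_eq0 eqxx. Qed.

Lemma eucl_norm0 {R : realType} {m : nat} : eucl_norm (0 : 'rV[R]_m) = 0.
Proof. by rewrite /eucl_norm big1 ?sqrtr0 // => i _; rewrite mxE expr0n. Qed.

Lemma cone_osc_at {R : realType} {P : topologicalType} {m q : nat}
    (Gamma : P -> 'rV[R]_m -> set 'rV[R]_q) (D : set P) (xibar : P)
    (z : 'rV[R]_m) :
  (forall xi, D xi -> pos_homogeneous (Gamma xi)) -> D xibar ->
  (forall w : P * 'rV[R]_m, D w.1 ->
     osc_at (fun w' => Gamma w'.1 w'.2) [set w' | D w'.1] w) ->
  Gamma xibar 0 `<=` [set 0] -> ~ Gamma xibar z 0 ->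
  osc_at (fun w : P * 'rV[R]_m => cone (Gamma w.1 w.2)) [set w | D w.1] (xibar, z).
Proof.
move=> hom Dxibar osc Gamma0 Gamma_z0 y [wk [yk [Dwk Kyk wk_cvg yk_cvg]]].
have /choice[uk ukP] k : exists u, [/\ `|u| < 1,
    Gamma (wk k).1 ((1 - `|u|) *: (wk k).2) u & yk k = (`|yk k| / `|u|) *: u].
  exact: cone_normalize (hom _ (Dwk k)) (Kyk k).
have in_ball (u : 'rV[R]_q) : closed_ball 0 1 u = (`|u| <= 1).
  by rewrite closed_ballE // /closed_ball_ /= sub0r normrN.
have [f [u [f_incr u_ball uk_cvg]]] : exists f u, [/\ increasing_seq f,
    closed_ball 0 1 u & uk \o f @ \oo --> u].
  apply: compact_cvg_subseq (@closed_ball0_compact R q 1 ltr01) _ => k.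
  by rewrite in_ball; case: (ukP k) => /ltW.
pose t := 1 - `|u|.
have Gu : Gamma xibar (t *: z) u.
  apply: (osc (xibar, t *: z) Dxibar).
  exists (fun k => ((wk (f k)).1, (1 - `|uk (f k)|) *: (wk (f k)).2)), (uk \o f).
  split=> [k | k | | //]; [exact: Dwk | by case: (ukP (f k)) |].
  have wkf_cvg := cvg_subseq f_incr wk_cvg.
  apply: (@cvg_pair _ _ _ _ (nbhs xibar) (nbhs (t *: z))).
    exact: cvg_comp wkf_cvg cvg_fst.
  apply: cvgZ; first exact: cvgB (cvg_cst _) (cvg_norm uk_cvg).
  exact: cvg_comp wkf_cvg cvg_snd.
have t_neq0 : t != 0.
  apply/eqP => t0; move: Gu; rewrite t0 scale0r => /Gamma0 u0.
  by move: t0; rewrite /t u0 normr0 subr0 => /eqP; rewrite oner_eq0.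
have t_gt0 : 0 < t by rewrite lt_def t_neq0 subr_ge0 -in_ball.
move: Gu; rewrite hom // => -[x Gx ux].
have u_neq0 : u != 0.
  apply: contra_notN Gamma_z0 => /eqP u0.
  by move: ux; rewrite u0 => /eqP; rewrite scaler_eq0 (negPf t_neq0) => /eqP <-.
have y_eq : y = (`|y| / `|u|) *: u.
  apply: (scale_norm_div_cvg u_neq0 _ (cvg_subseq f_incr yk_cvg) uk_cvg).
  by move=> k /=; case: (ukP (f k)).
exists (`|y| / `|u| * t); first exact: mulr_ge0 (divr_ge0 _ _) (ltW t_gt0).
by exists x => //; rewrite {1}y_eq -ux scalerA.
Qed.

Theorem proposition3 (R : realType) (n p m q s : nat)
  (U D : set ('rV[R]_n * 'rV[R]_p))
  (Gamma : ('rV[R]_n * 'rV[R]_p) -> 'rV[R]_m -> set 'rV[R]_q)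
  (xibar : 'rV[R]_n * 'rV[R]_p)
  (hs : (s <= q)%N) (T : 'rV[R]_m -> set 'rV[R]_(q - s)) :
  open U -> D `<=` U -> D !=set0 ->
  (forall xi, D xi -> pos_homogeneous (Gamma xi)) ->
  D xibar ->
  (forall w : ('rV[R]_n * 'rV[R]_p) * 'rV[R]_m, D w.1 ->
     osc_at (fun w' => Gamma w'.1 w'.2) [set w' | D w'.1] w) ->
  (forall z, Gamma xibar z =
     [set castmx (erefl 1%N, subnKC hs) (row_mx (0 : 'rV[R]_s) t) | t in T z]) ->
  T 0 = [set 0] ->
  [set z | T z 0] = [set 0] ->
  forall z, unit_sphere R m z -> sdom (Gamma xibar) z ->
    osc_at (fun w : ('rV[R]_n * 'rV[R]_p) * 'rV[R]_m => cone (Gamma w.1 w.2))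
      [set w | D w.1 /\ unit_sphere R m w.2] (xibar, z).
Proof.
move=> _ _ _ hom Dxibar osc HG T0 T_zeros z z_sphere _.
apply: (@osc_atS _ _ _ _ [set w | D w.1]); first by move=> w [].
apply: (cone_osc_at Gamma D xibar z hom Dxibar osc).
  move=> y; rewrite HG T0 => -[t /= -> <-].
  by apply/eqP; rewrite castmx_row0_eq0.
rewrite HG => -[t Tt /eqP]; rewrite castmx_row0_eq0 => /eqP t0.
have : [set z | T z 0] z by rewrite /= -t0.
rewrite T_zeros /= => z0; move: z_sphere; rewrite /unit_sphere /= z0 eucl_norm0.
by move/eqP; rewrite eq_sym oner_eq0.
Qed.
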